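(* Assume $\bar L>0$ and consider the $l$-th cycle of RPF-SFISTA. Then: (a) the cycle stops (either by a restart in step (iv) or by termination in step (v)) after at most $$\left\lceil(1+Q_l)\log^+_1\!\left(\frac{C_{\bar\mu}(z_{l-1})\,\zeta_l^2}{\chi\hat\epsilon^2}\right)+1\right\rceil+\left\lceil\frac{\log^+_0\big(2\bar L/((1-\chi)\underline M_l)\big)}{\log\beta}\right\rceil$$ ACG iterations/resolvent evaluations; (b) if the cycle terminates in step (v), its output $(y,v,\xi,L)$ satisfies $\phi(\xi)\le\min\{\phi(z_0),\phi(y)\}$ and $\bar M_0\le L\le\max\{\bar M_0,\kappa\bar L\}$, and $(y,v)$ is an $\hat\epsilon$-optimal solution; (c) if $\mu_{l-1}\in(0,\bar\mu]$, then the cycle never restarts and terminates in step (v) with an output as in (b), within the number of ACG iterations/resolvent evaluations given in (a).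
   Context: Setup. Let $f:\mathbb R^n\to\mathbb R$ be convex and differentiable with $\|\nabla f(z')-\nabla f(z)\|\le\bar L\|z'-z\|$ for all $z,z'\in\mathbb R^n$ (some $\bar L\ge0$). Let $h:\mathbb R^n\to(-\infty,\infty]$ be proper, lower semicontinuous and convex with domain $\mathcal H$. Let $\phi:=f+h$ be $\bar\mu$-strongly convex for some $\bar\mu>0$, with (unique) minimizer $z^*$. Write $\ell_f(u;x):=f(x)+\langle\nabla f(x),u-x\rangle$. Define $C_{\bar\mu}(z):=\frac{8}{\bar\mu}[\phi(z)-\phi(z^* )]$ and $\kappa:=2\beta/(1-\chi)$. For $t>0$, $b\ge0$ let $\log^+_b(t):=\max\{\log t,b\}$. A pair $(y,v)$ is an $\hat\epsilon$-optimal solution if $v\in\nabla f(y)+\partial h(y)$ and $\|v\|\le\hat\epsilon$. RPF-SFISTA. Parameters $\chi\in(0,1)$, $\beta>1$; inputs $\mu_0>0$, $\bar M_0>0$, $z_0\in\mathcal H$, $\hat\epsilon>0$. The method runs in cycles $l=1,2,\dots$. At the start of cycle $l$: choose $\underline M_l\in[\max\{\bar M_{l-1}/4,\bar M_0\},\bar M_{l-1}]$ (so $\underline M_1=\bar M_0$), set $\mu:=\mu_{l-1}$, $x_0:=z_{l-1}$, $\xi_0:=y_0:=x_0$, $A_0:=0$, $\tau_0:=1$, $L_0:=\underline M_l$. Then for $j=1,2,\dots$: (i) set $L_j:=L_{j-1}$; (ii) compute $a_{j-1}=\frac{\tau_{j-1}+\sqrt{\tau_{j-1}^2+4\tau_{j-1}A_{j-1}L_j}}{2L_j}$,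 $\tilde x_{j-1}=\frac{A_{j-1}y_{j-1}+a_{j-1}x_{j-1}}{A_{j-1}+a_{j-1}}$, $y_j=\arg\min_{u}\{\ell_f(u;\tilde x_{j-1})+h(u)+\frac{L_j}{2}\|u-\tilde x_{j-1}\|^2\}$; if $f(y_j)\le\ell_f(y_j;\tilde x_{j-1})+\frac{(1-\chi)L_j}{4}\|y_j-\tilde x_{j-1}\|^2$ go to (iii), otherwise replace $L_j$ by $\beta L_j$ and repeat (ii); (iii) set $\xi_j:=y_j$ if $\phi(y_j)\le\phi(\xi_{j-1})$ and $\xi_j:=\xi_{j-1}$ otherwise; $A_j:=A_{j-1}+a_{j-1}$; $\tau_j:=\tau_{j-1}+a_{j-1}\mu/2$; $s_j:=L_j(\tilde x_{j-1}-y_j)$; $x_j:=\tau_j^{-1}[\mu a_{j-1}y_j/2+\tau_{j-1}x_{j-1}-a_{j-1}s_j]$; $v_j:=\nabla f(y_j)-\nabla f(\tilde x_{j-1})+s_j$; (iv) if $\|\xi_j-x_0\|^2<\chi A_jL_j\|y_j-\tilde x_{j-1}\|^2$, the cycle ends with a restart: set $z_l:=\xi_j$, $\bar M_l:=L_j$, $\mu_l:=\mu/2$ and start cycle $l+1$; (v) otherwise, if $\|v_j\|\le\hat\epsilon$, stop and output $(y,v,\xi,L):=(y_j,v_j,\xi_j,L_j)$; else go to iteration $j+1$. Each computation of a point $y_j$ in (ii) (including repetitions in the line search) counts as one ACG iteration/resolvent evaluation. Cycle quantities: $\zeta_l:=\bar L+\max\{\underline M_l,\kappa\bar L\}$ and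 $Q_l:=2\sqrt2\sqrt{\max\{\underline M_l,\kappa\bar L\}/\mu_{l-1}}$. *)

From HB Require Import structures.
From mathcomp Require Import all_boot all_order all_algebra.
From mathcomp Require Import all_classical all_reals all_analysis.
Set Implicit Arguments. Unset Strict Implicit. Unset Printing Implicit Defensive.
Import Order.TTheory GRing.Theory Num.Theory.
Local Open Scope ring_scope.

Definition dotv {R : realType} {n : nat} (u v : 'rV[R]_n) : R :=
  \sum_(i < n) u ord0 i * v ord0 i.
Definition normv {R : realType} {n : nat} (u : 'rV[R]_n) : R :=
  Num.sqrt (dotv u u).

Definition lf {R : realType} {n : nat} (f : 'rV[R]_n -> R)
  (gf : 'rV[R]_n -> 'rV[R]_n) (x u : 'rV[R]_n) : R :=
  f x + dotv (gf x) (u - x).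

Definition is_gradient {R : realType} {n : nat} (f : 'rV[R]_n -> R)
  (gf : 'rV[R]_n -> 'rV[R]_n) : Prop :=
  forall x (eps : R), 0 < eps -> exists2 d : R, 0 < d &
    forall y, normv (y - x) < d -> `|f y - lf f gf x y| <= eps * normv (y - x).

Definition convex_fun {R : realType} {n : nat} (f : 'rV[R]_n -> R) : Prop :=
  forall x y : 'rV[R]_n, forall t : R, 0 <= t <= 1 ->
    f (t *: x + (1 - t) *: y) <= t * f x + (1 - t) * f y.

Definition lipschitz_grad {R : realType} {n : nat}
  (gf : 'rV[R]_n -> 'rV[R]_n) (Lbar : R) : Prop :=
  forall z z', normv (gf z' - gf z) <= Lbar * normv (z' - z).

Definition proper_fun {R : realType} {n : nat} (h : 'rV[R]_n -> \bar R) : Prop :=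
  (exists x, (h x < +oo)%E) /\ (forall x, (-oo < h x)%E).

Definition lsc_fun {R : realType} {n : nat} (h : 'rV[R]_n -> \bar R) : Prop :=
  forall x (c : R), (c%:E < h x)%E -> exists2 d : R, 0 < d &
    forall y, normv (y - x) < d -> (c%:E < h y)%E.

Definition convex_efun {R : realType} {n : nat} (h : 'rV[R]_n -> \bar R) : Prop :=
  forall x y : 'rV[R]_n, forall t : R, 0 < t < 1 ->
    (h (t *: x + (1 - t) *: y)%R <= t%:E * h x + (1 - t)%:E * h y)%E.

Definition phi {R : realType} {n : nat} (f : 'rV[R]_n -> R)
  (h : 'rV[R]_n -> \bar R) (x : 'rV[R]_n) : \bar R := ((f x)%:E + h x)%E.

Definition strongly_convex_efun {R : realType} {n : nat}
  (g : 'rV[R]_n -> \bar R) (mu : R) : Prop :=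
  forall x y : 'rV[R]_n, forall t : R, 0 < t < 1 ->
    (g (t *: x + (1 - t) *: y)%R <= t%:E * g x + (1 - t)%:E * g y
       - (mu / 2 * t * (1 - t) * normv (x - y) ^+ 2)%:E)%E.

Definition is_minimizer {R : realType} {n : nat} (g : 'rV[R]_n -> \bar R)
  (u : 'rV[R]_n) : Prop := forall w, (g u <= g w)%E.

Definition subdiff {R : realType} {n : nat} (h : 'rV[R]_n -> \bar R)
  (y v : 'rV[R]_n) : Prop :=
  h y \is a fin_num /\ forall u, (h y + (dotv v (u - y))%:E <= h u)%E.

Definition logplus {R : realType} (b t : R) : R := Num.max (ln t) b.

(* objective of the resolvent subproblem in step (ii) *)
Definition prox_obj {R : realType} {n : nat} (f : 'rV[R]_n -> R)
  (gf : 'rV[R]_n -> 'rV[R]_n) (h : 'rV[R]_n -> \bar R) (L : R)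
  (xt : 'rV[R]_n) : 'rV[R]_n -> \bar R :=
  fun u => ((lf f gf xt u + L / 2 * normv (u - xt) ^+ 2)%:E + h u)%E.

(* line-search acceptance test of step (ii) *)
Definition ls_test {R : realType} {n : nat} (f : 'rV[R]_n -> R)
  (gf : 'rV[R]_n -> 'rV[R]_n) (chi L : R) (xt y : 'rV[R]_n) : Prop :=
  f y <= lf f gf xt y + (1 - chi) * L / 4 * normv (y - xt) ^+ 2.

Definition acg_a {R : realType} (tau A L : R) : R :=
  (tau + Num.sqrt (tau ^+ 2 + 4 * tau * A * L)) / (2 * L).
Definition acg_xt {R : realType} {n : nat} (A : R) (y : 'rV[R]_n) (a : R)
  (x : 'rV[R]_n) : 'rV[R]_n := (A + a)^-1 *: (A *: y + a *: x).

(* The (infinite) sequence of quantities generated inside one cycle.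
   tL j = L_j (accepted), tk j = number of beta-increases in the line search
   of iteration j (so iteration j uses tk j + 1 resolvent evaluations),
   ta j = a_j, txt j = x~_j, ty j = y_j, tx j = x_j, tA j = A_j,
   ttau j = tau_j, txi j = xi_j, ts j = s_j, tv j = v_j. *)
Record ctrace (R : realType) (n : nat) := CTrace {
  tL : nat -> R; tk : nat -> nat; ta : nat -> R; txt : nat -> 'rV[R]_n;
  ty : nat -> 'rV[R]_n; tx : nat -> 'rV[R]_n; tA : nat -> R; ttau : nat -> R;
  txi : nat -> 'rV[R]_n; ts : nat -> 'rV[R]_n; tv : nat -> 'rV[R]_n }.

(* tr is a run of the iterations (i)-(iii) of a cycle started with
   mu := mu, x0 := x0, L_0 := Mlow (iteration j.+1 described below) *)
Definition cycle_run {R : realType} {n : nat} (f : 'rV[R]_n -> R)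
  (gf : 'rV[R]_n -> 'rV[R]_n) (h : 'rV[R]_n -> \bar R) (chi beta mu : R)
  (x0 : 'rV[R]_n) (Mlow : R) (tr : ctrace R n) : Prop :=
  [/\ tL tr 0 = Mlow, tA tr 0 = 0, ttau tr 0 = 1 &
      [/\ tx tr 0 = x0, ty tr 0 = x0 & txi tr 0 = x0]] /\
  forall j : nat,
    [/\ tL tr j.+1 = beta ^+ (tk tr j.+1) * tL tr j,
        (forall i, (i < tk tr j.+1)%N ->
           let Li := beta ^+ i * tL tr j in
           let ai := acg_a (ttau tr j) (tA tr j) Li in
           let xti := acg_xt (tA tr j) (ty tr j) ai (tx tr j) in
           exists2 u, is_minimizer (prox_obj f gf h Li xti) u &
                      ~ ls_test f gf chi Li xti u),
        ta tr j = acg_a (ttau tr j) (tA tr j) (tL tr j.+1) &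
     [/\ txt tr j = acg_xt (tA tr j) (ty tr j) (ta tr j) (tx tr j),
        is_minimizer (prox_obj f gf h (tL tr j.+1) (txt tr j)) (ty tr j.+1) &
        ls_test f gf chi (tL tr j.+1) (txt tr j) (ty tr j.+1)]] /\
    [/\ txi tr j.+1 = (if (phi f h (ty tr j.+1) <= phi f h (txi tr j))%E
                       then ty tr j.+1 else txi tr j),
        tA tr j.+1 = tA tr j + ta tr j &
    [/\ ttau tr j.+1 = ttau tr j + ta tr j * mu / 2,
        ts tr j.+1 = tL tr j.+1 *: (txt tr j - ty tr j.+1),
        tx tr j.+1 = (ttau tr j.+1)^-1 *:
           ((mu * ta tr j / 2) *: ty tr j.+1 + ttau tr j *: tx tr j
             - ta tr j *: ts tr j.+1) &
        tv tr j.+1 = gf (ty tr j.+1) - gf (txt tr j) + ts tr j.+1]].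

(* step (iv) restart test at iteration j >= 1 *)
Definition restart_at {R : realType} {n : nat} (chi : R) (x0 : 'rV[R]_n)
  (tr : ctrace R n) (j : nat) : Prop :=
  normv (txi tr j - x0) ^+ 2 <
    chi * tA tr j * tL tr j * normv (ty tr j - txt tr j.-1) ^+ 2.

(* step (v) termination at iteration j >= 1 *)
Definition terminate_at {R : realType} {n : nat} (chi : R) (x0 : 'rV[R]_n)
  (eps : R) (tr : ctrace R n) (j : nat) : Prop :=
  ~ restart_at chi x0 tr j /\ normv (tv tr j) <= eps.

Definition stops_at {R : realType} {n : nat} (chi : R) (x0 : 'rV[R]_n)
  (eps : R) (tr : ctrace R n) (j : nat) : Prop :=
  restart_at chi x0 tr j \/ terminate_at chi x0 eps tr j.

Definition first_stop {R : realType} {n : nat} (chi : R) (x0 : 'rV[R]_n)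
  (eps : R) (tr : ctrace R n) (J : nat) : Prop :=
  [/\ (0 < J)%N, stops_at chi x0 eps tr J &
      forall j, (0 < j < J)%N -> ~ stops_at chi x0 eps tr j].

Definition acg_count {R : realType} {n : nat} (tr : ctrace R n) (J : nat) : nat :=
  \sum_(1 <= j < J.+1) (tk tr j).+1.

(* RPF-SFISTA has run cycles 1..l: cycles 1..l-1 ended with a restart, and
   cycle l was started (mu i, z i, Mbar i as in the paper, Mlow i = M_l underline,
   tr i = quantities generated in cycle i). *)
Definition method_run {R : realType} {n : nat} (f : 'rV[R]_n -> R)
  (gf : 'rV[R]_n -> 'rV[R]_n) (h : 'rV[R]_n -> \bar R) (chi beta mu0 Mbar0 : R)
  (z0 : 'rV[R]_n) (eps : R) (mu : nat -> R) (z : nat -> 'rV[R]_n)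
  (Mbar Mlow : nat -> R) (tr : nat -> ctrace R n) (l : nat) : Prop :=
  [/\ mu 0%N = mu0, z 0%N = z0, Mbar 0%N = Mbar0 &
      (forall i, (0 < i <= l)%N ->
         Num.max (Mbar i.-1 / 4) Mbar0 <= Mlow i <= Mbar i.-1 /\
         cycle_run f gf h chi beta (mu i.-1) (z i.-1) (Mlow i) (tr i))] /\
      (forall i, (0 < i < l)%N -> exists J,
         [/\ first_stop chi (z i.-1) eps (tr i) J,
             restart_at chi (z i.-1) (tr i) J,
             z i = txi (tr i) J, Mbar i = tL (tr i) J & mu i = mu i.-1 / 2]).

From HB Require Import structures.
From mathcomp Require Import all_boot all_order all_algebra.
From mathcomp Require Import all_classical all_reals all_analysis.
From mathcomp Require Import ring lra zify.
Import Order.TTheory GRing.Theory Num.Theory.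
Set Implicit Arguments. Unset Strict Implicit.
Local Open Scope ring_scope.

(* The accepted estimates L_j of a cycle stay in [M_l, max(M_l, kappa Lbar)]:
   by the descent lemma the line-search test always holds once
   L >= 2 Lbar / (1 - chi), and L only grows by factors of beta, which also
   bounds the number of rejected trials by log_beta (2 Lbar / ((1 - chi) M_l)).
   The accelerated-gradient recursion gives
   A_j L_j >= (1 + sqrt (mu / (2 Lmax))) ^ (j - 1).  If the restart test fails
   at iteration j, strong convexity keeps xi_j within squared distance C of x0,
   so chi A_j L_j |y_j - x~_(j-1)|^2 <= C, while |v_j| <= zeta |y_j - x~_(j-1)|;
   hence |v_j| <= eps as soon as A_j L_j >= C zeta^2 / (chi eps^2), which gives
   (a).  When mu <= mubar, the potential
   A_j (phi y_j - phi u) + tau_j / 2 |u - x_j|^2 never exceeds |u - x0|^2 / 2,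
   and at u = xi_j this contradicts the restart test, which gives (c). *)

Section InnerProduct.
Variables (R : realType) (n : nat).
Implicit Types (u v w : 'rV[R]_n) (c : R).

Lemma dotvC u v : dotv u v = dotv v u.
Proof. by apply: eq_bigr => i _; rewrite mulrC. Qed.

Lemma dotvDl u v w : dotv (v + w) u = dotv v u + dotv w u.
Proof. by rewrite /dotv -big_split; apply: eq_bigr => i _; rewrite !mxE mulrDl. Qed.

Lemma dotvDr u v w : dotv u (v + w) = dotv u v + dotv u w.
Proof. by rewrite dotvC dotvDl !(dotvC u). Qed.

Lemma dotvZl u v c : dotv (c *: v) u = c * dotv v u.
Proof. by rewrite /dotv mulr_sumr; apply: eq_bigr => i _; rewrite !mxE mulrA. Qed.

Lemma dotvZr u v c : dotv u (c *: v) = c * dotv u v.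
Proof. by rewrite dotvC dotvZl dotvC. Qed.

Lemma dotvNl u v : dotv (- v) u = - dotv v u.
Proof. by rewrite -scaleN1r dotvZl mulN1r. Qed.

Lemma dotvNr u v : dotv u (- v) = - dotv u v.
Proof. by rewrite dotvC dotvNl dotvC. Qed.

Lemma dotvBl u v w : dotv (v - w) u = dotv v u - dotv w u.
Proof. by rewrite dotvDl dotvNl. Qed.

Lemma dotvBr u v w : dotv u (v - w) = dotv u v - dotv u w.
Proof. by rewrite dotvDr dotvNr. Qed.

Lemma dotvNN u : dotv (- u) (- u) = dotv u u.
Proof. by rewrite dotvNl dotvNr opprK. Qed.

Lemma dotv_ge0 u : 0 <= dotv u u.
Proof. by apply: sumr_ge0 => i _; rewrite -expr2 sqr_ge0. Qed.

Lemma normv_ge0 u : 0 <= normv u.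
Proof. exact: sqrtr_ge0. Qed.

Lemma normv_sqr u : normv u ^+ 2 = dotv u u.
Proof. by rewrite sqr_sqrtr // dotv_ge0. Qed.

Lemma normvZ u c : 0 <= c -> normv (c *: u) = c * normv u.
Proof.
move=> c0; rewrite /normv dotvZl dotvZr mulrA -expr2.
by rewrite sqrtrM ?sqr_ge0 // sqrtr_sqr ger0_norm.
Qed.

Lemma dotv_young u v lam : 0 < lam ->
  2 * dotv u v <= lam * dotv u u + dotv v v / lam.
Proof.
move=> lam0; have := dotv_ge0 (lam *: u - v).
rewrite !(dotvBl, dotvBr, dotvZl, dotvZr) (dotvC v u).
have -> : lam * (lam * dotv u u) - lam * dotv u v - (lam * dotv u v - dotv v v)
  = lam * (lam * dotv u u + dotv v v / lam - 2 * dotv u v).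
  by field; rewrite gt_eqF.
by rewrite pmulr_rge0 // subr_ge0.
Qed.

Lemma dotv_le_of_sqr_le u v a : 0 < a -> dotv u u <= a ^+ 2 * dotv v v ->
  dotv u v <= a * dotv v v.
Proof.
move=> a0 uu; have ai0 : 0 < a^-1 by rewrite invr_gt0.
have := dotv_young u v ai0.
have : a^-1 * dotv u u <= a * dotv v v.
  by rewrite ler_pdivrMl // mulrA -expr2.
rewrite invrK mulrC; lra.
Qed.

Lemma dotv_add_le u v a b d : 0 < a -> 0 < b ->
  dotv u u <= a ^+ 2 * d -> dotv v v <= b ^+ 2 * d ->
  dotv (u + v) (u + v) <= (a + b) ^+ 2 * d.
Proof.
move=> a0 b0 uu vv; have := dotv_young u v (divr_gt0 b0 a0).
rewrite !(dotvDl, dotvDr) (dotvC v u).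
have : b / a * dotv u u <= a * b * d.
  have -> : a * b * d = b / a * (a ^+ 2 * d) by field; rewrite gt_eqF.
  by rewrite ler_wpM2l // ltW // divr_gt0.
have : dotv v v / (b / a) <= a * b * d.
  have -> : a * b * d = (b / a)^-1 * (b ^+ 2 * d) by field; rewrite !gt_eqF.
  by rewrite mulrC ler_wpM2l // ltW // invr_gt0 divr_gt0.
have -> : (a + b) ^+ 2 * d = a ^+ 2 * d + 2 * (a * b * d) + b ^+ 2 * d by ring.
lra.
Qed.

Lemma dotv_sqr_le_sum u v w :
  dotv (u - v) (u - v) <= 2 * dotv (u - w) (u - w) + 2 * dotv (v - w) (v - w).
Proof.
have := dotv_ge0 (u + v - 2%:R *: w).
have -> : u - v = (u - w) - (v - w) by rewrite opprB addrA subrK.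
have -> : u + v - 2%:R *: w = (u - w) + (v - w).
  by rewrite addrACA -opprD scaler_nat mulr2n.
move: (u - w) (v - w) => a b.
rewrite !(dotvDl, dotvDr, dotvNl, dotvNr) opprK (dotvC b a); lra.
Qed.

End InnerProduct.

Lemma le_of_le_addtM (R : realFieldType) (x y K : R) : 0 <= K ->
  (forall t, 0 < t < 1 -> x <= y + t * K) -> x <= y.
Proof.
move=> K0 H; apply/ler_addgt0Pr => e e0.
pose t := Num.min (1 / 2) (e / (K + 1)).
have t0 : 0 < t by rewrite lt_min divr_gt0 //= ?divr_gt0 //; lra.
have t1 : t < 1 by rewrite gt_min; apply/orP; left; lra.
have tK : t * K <= e.
  have : t <= e / (K + 1) by rewrite ge_min lexx orbT.
  rewrite ler_pdivlMr; last lra.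
  nra.
by apply: le_trans (H t _) _; [rewrite t0 t1 | rewrite lerD2l].
Qed.

Lemma natr_le_ceil (R : realType) (k : nat) (x : R) :
  k%:R - 1 < x -> k%:R <= (Num.ceil x)%:~R :> R.
Proof.
move=> H; have : (k%:Z - 1 < Num.ceil x)%R by rewrite ceil_gt_int intrB -pmulrn.
rewrite pmulrn ler_int; lia.
Qed.

Lemma ln1D_ge (R : realType) (x : R) : 0 < x -> x / (1 + x) <= ln (1 + x).
Proof.
move=> x0.
have h1 : -1 < - (x / (1 + x)).
  by rewrite ltrNl opprK ltr_pdivrMr; lra.
have := le_ln1Dx h1.
have -> : 1 + - (x / (1 + x)) = (1 + x)^-1 by field; rewrite gt_eqF //; lra.
rewrite lnV ?posrE; lra.
Qed.

Lemma mul_ln1D_ge1 (R : realType) (x : R) : 0 < x -> 1 <= (1 + 2 / x) * ln (1 + x).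
Proof.
move=> x0; apply: le_trans (_ : (1 + 2 / x) * (x / (1 + x)) <= _).
  have -> : (1 + 2 / x) * (x / (1 + x)) = (x + 2) / (1 + x).
    by field; rewrite !gt_eqF //; lra.
  by rewrite ler_pdivlMr; lra.
have x20 : 0 < 2 / x by rewrite divr_gt0.
by rewrite ler_pM2l ?ln1D_ge //; lra.
Qed.

Section SmoothConvex.
Variables (R : realType) (n : nat) (f : 'rV[R]_n -> R) (gf : 'rV[R]_n -> 'rV[R]_n).
Hypotheses (cf : convex_fun f) (gr : is_gradient f gf).

Lemma lf_le_convex z w : lf f gf z w <= f w.
Proof.
set N := normv (w - z); have N0 : 0 <= N := normv_ge0 _.
suff key : forall e, 0 < e -> lf f gf z w - f w <= e * N.
  rewrite -subr_le0; apply/ler_addgt0Pr => e e0; rewrite add0r.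
  apply: le_trans (key (e / (N + 1)) _) _; first by rewrite divr_gt0 //; lra.
  by rewrite mulrAC ler_pdivrMr; nra.
move=> e e0; have [d d0 Hd] := gr z e0.
pose t := Num.min (1 / 2) (d / (N + 1)).
have t0 : 0 < t by rewrite lt_min !divr_gt0 //; lra.
have t1 : t < 1 by rewrite gt_min; apply/orP; left; lra.
have tN : t * N < d.
  have : t <= d / (N + 1) by rewrite ge_min lexx orbT.
  by rewrite ler_pdivlMr; nra.
have ey : t *: w + (1 - t) *: z - z = t *: (w - z).
  by apply/rowP => i; rewrite !mxE; ring.
have := Hd (t *: w + (1 - t) *: z); rewrite ey normvZ; last exact: ltW.
move=> /(_ tN); rewrite /lf ey dotvZr ler_norml => /andP [Hnear _].
have Hconv : f (t *: w + (1 - t) *: z) <= t * f w + (1 - t) * f z.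
  by apply: cf; apply/andP; split; apply: ltW.
rewrite -/N mulrCA in Hnear; rewrite mulrBl mul1r in Hconv.
rewrite /lf -(ler_pM2l t0) mulrBr mulrDr; lra.
Qed.

Variable Lbar : R.
Hypotheses (L0 : 0 < Lbar) (lg : lipschitz_grad gf Lbar).

Lemma lipschitz_grad_dotv a b :
  dotv (gf a - gf b) (gf a - gf b) <= Lbar ^+ 2 * dotv (a - b) (a - b).
Proof.
have Lab : 0 <= Lbar * normv (a - b) by rewrite mulr_ge0 ?normv_ge0 // ltW.
by rewrite -!normv_sqr -exprMn ler_sqr ?nnegrE ?normv_ge0 //; apply: lg.
Qed.

Lemma dotv_grad_incr_le x d t : 0 < t ->
  dotv (gf (x + t *: d) - gf x) d <= Lbar * t * dotv d d.
Proof.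
move=> t0; apply: dotv_le_of_sqr_le; first exact: mulr_gt0.
apply: le_trans (lipschitz_grad_dotv _ _) _.
rewrite (addrC x) addrK dotvZl dotvZr.
by have -> : (Lbar * t) ^+ 2 * dotv d d = Lbar ^+ 2 * (t * (t * dotv d d)) by ring.
Qed.

(* Riemann-sum form of the descent lemma: walk from x to y in N equal steps,
   bounding each increment by the gradient inequality at the next point. *)
Lemma descent_steps x y (N : nat) : (0 < N)%N ->
  f y <= lf f gf x y + Lbar / 2 * dotv (y - x) (y - x)
         + Lbar * dotv (y - x) (y - x) / (2 * N%:R).
Proof.
move=> N0; have NR : 0 < N%:R :> R by rewrite ltr0n.
set d := y - x; set G := dotv (gf x) d; set D := dotv d d.
pose z m := x + (m%:R / N%:R) *: d.
suff IH m : f (z m) <= f x + m%:R / N%:R * G + Lbar * D * (m%:R * (m%:R + 1)) / (2 * N%:R ^+ 2).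
  have := IH N; rewrite /z divff ?gt_eqF // scale1r addrC subrK => H.
  apply: le_trans H _; rewrite /lf -/d -/G mul1r.
  have -> : Lbar * D * (N%:R * (N%:R + 1)) / (2 * N%:R ^+ 2)
     = Lbar / 2 * D + Lbar * D / (2 * N%:R) by field; rewrite gt_eqF.
  by rewrite addrA.
elim: m => [|m IH].
  by rewrite /z !mul0r scale0r addr0 mulr0 mul0r !addr0.
have step := lf_le_convex (z m.+1) (z m); rewrite /lf in step.
have ez : z m - z m.+1 = (- N%:R^-1) *: d.
  by apply/rowP => i; rewrite /z !mxE -natr1; field; rewrite gt_eqF.
have inc := dotv_grad_incr_le x d (divr_gt0 (ltr0Sn R m) NR).
rewrite ez dotvZr in step; rewrite -/(z m.+1) in inc.
have eG : dotv (gf (z m.+1)) d = G + dotv (gf (z m.+1) - gf x) d by rewrite dotvBl addrC subrK.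
have eS : m.+1%:R = m%:R + 1 :> R by rewrite natr1.
rewrite eG in step; rewrite -/D in inc; move: IH step inc; rewrite eS.
set M := m%:R; set A := dotv (gf (z m.+1) - gf x) d => IH step inc.
have hA : A / N%:R <= Lbar * ((M + 1) / N%:R) * D / N%:R by rewrite ler_pM2r ?invr_gt0.
have -> : (M + 1) / N%:R * G = M / N%:R * G + G / N%:R by field; rewrite gt_eqF.
have -> : Lbar * D * ((M + 1) * (M + 1 + 1)) / (2 * N%:R ^+ 2)
   = Lbar * D * (M * (M + 1)) / (2 * N%:R ^+ 2) + Lbar * ((M + 1) / N%:R) * D / N%:R.
  by field; rewrite gt_eqF.
have : - N%:R^-1 * (G + A) = - (G / N%:R) - A / N%:R by rewrite mulNr mulrC mulrDl opprD.
lra.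
Qed.

Lemma descent_lemma x y : f y <= lf f gf x y + Lbar / 2 * dotv (y - x) (y - x).
Proof.
apply/ler_addgt0Pr => e e0.
set K := Lbar * dotv (y - x) (y - x) / 2.
have K0 : 0 <= K by rewrite divr_ge0 // mulr_ge0 ?dotv_ge0 // ltW.
have := archi_boundP (divr_ge0 K0 (ltW e0)); set N := Num.bound _ => HN.
have N0 : (0 < N)%N by rewrite -(ltr0n R); apply: le_lt_trans HN; rewrite divr_ge0 // ltW.
apply: le_trans (descent_steps x y N0) _; rewrite lerD2l.
have -> : Lbar * dotv (y - x) (y - x) / (2 * N%:R) = K / N%:R.
  by rewrite /K; field; rewrite gt_eqF // ltr0n.
by rewrite ler_pdivrMr ?ltr0n // mulrC -ler_pdivrMr // ltW.
Qed.

Lemma ls_test_fail_lt chi L xt u : chi < 1 -> ~ ls_test f gf chi L xt u ->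
  L < 2 * Lbar / (1 - chi).
Proof.
move=> c1 nt; have := descent_lemma xt u.
have : lf f gf xt u + (1 - chi) * L / 4 * normv (u - xt) ^+ 2 < f u.
  by rewrite ltNge; apply/negP.
rewrite normv_sqr; set D := dotv _ _ => Hfail Hdesc.
have D0 : 0 < D.
  rewrite lt_neqAle dotv_ge0 andbT; apply/eqP => D0.
  by move: Hfail Hdesc; rewrite -D0 !mulr0; lra.
have : (1 - chi) * L / 4 * D < Lbar / 2 * D by lra.
rewrite ltr_pM2r // => HL; rewrite ltr_pdivlMr; nra.
Qed.

Lemma residual_dotv_le (L : R) y xt : 0 < L ->
  dotv (gf y - gf xt + L *: (xt - y)) (gf y - gf xt + L *: (xt - y))
    <= (Lbar + L) ^+ 2 * dotv (y - xt) (y - xt).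
Proof.
move=> L0'; apply: dotv_add_le => //; first exact: lipschitz_grad_dotv.
by rewrite dotvZl dotvZr mulrA -expr2 -dotvNN opprB.
Qed.

End SmoothConvex.

Section Resolvent.
Variables (R : realType) (n : nat) (f : 'rV[R]_n -> R) (gf : 'rV[R]_n -> 'rV[R]_n).
Variable h : 'rV[R]_n -> \bar R.
Hypotheses (ph : proper_fun h) (ch : convex_efun h).

Lemma prox_model_segment (L : R) xt y u t :
  lf f gf xt (y + t *: (u - y)) + L / 2 * normv (y + t *: (u - y) - xt) ^+ 2
  = lf f gf xt y + L / 2 * normv (y - xt) ^+ 2
    + t * dotv (gf xt - L *: (xt - y)) (u - y) + t ^+ 2 * (L / 2 * dotv (u - y) (u - y)).
Proof.
rewrite /lf; have -> : y + t *: (u - y) - xt = (y - xt) + t *: (u - y) by rewrite addrAC.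
rewrite !normv_sqr -[xt - y]opprB.
move: (y - xt) (u - y) => a b.
rewrite !(dotvDl, dotvDr, dotvZl, dotvZr, dotvNl, dotvNr) (dotvC b a).
by field.
Qed.

Lemma prox_subgradient L xt y : 0 < L ->
  is_minimizer (prox_obj f gf h L xt) y -> subdiff h y (L *: (xt - y) - gf xt).
Proof.
move=> L0 ymin; case: ph => [[xp hxp] hgt].
have /EFin_fin_numP [r Hr] : h xp \is a fin_num by rewrite fin_numElt hgt.
have /EFin_fin_numP [hy Hy] : h y \is a fin_num.
  rewrite fin_numElt hgt /=; have := ymin xp; rewrite /prox_obj Hr -EFinD.
  by case: (h y) => [r'| |] //= _; rewrite ltry.
split; first by rewrite Hy.
move=> u; rewrite Hy -EFinD; case Hu: (h u) => [hu| |]; last 2 first.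
- by rewrite leey.
- by have := hgt u; rewrite Hu.
rewrite lee_fin; set K := L / 2 * dotv (u - y) (u - y).
apply: (@le_of_le_addtM _ _ _ K); first by rewrite mulr_ge0 ?dotv_ge0 ?divr_ge0 ?ltW.
move=> t /andP [t0 t1]; set w := y + t *: (u - y).
have Hconv : (h w <= t%:E * h u + (1 - t)%:E * h y)%E.
  have -> : w = t *: u + (1 - t) *: y by apply/rowP => i; rewrite !mxE; ring.
  by apply: ch; rewrite t0 t1.
rewrite Hu Hy -!EFinM -EFinD in Hconv.
have /EFin_fin_numP [hw Hw] : h w \is a fin_num.
  by rewrite fin_numElt hgt (le_lt_trans Hconv) ?ltry.
have := ymin w; rewrite /prox_obj Hy Hw -!EFinD lee_fin prox_model_segment.
rewrite Hw lee_fin mulrBl mul1r in Hconv.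
rewrite -/K -[gf xt - _]opprB dotvNl mulrN expr2 -mulrA => Hmin.
rewrite -(ler_pM2l t0) !mulrDr; lra.
Qed.

Lemma prox_lower_model L xt y : convex_fun f -> is_gradient f gf -> 0 < L ->
  is_minimizer (prox_obj f gf h L xt) y ->
  exists hy : R, h y = hy%:E /\ forall u,
    ((lf f gf xt y + hy + dotv (L *: (xt - y)) (u - y))%:E <= phi f h u)%E.
Proof.
move=> cf gr L0 ymin; have [/EFin_fin_numP [hy Hy] Hsub] := prox_subgradient L0 ymin.
exists hy; split => // u; apply: le_trans (leeD2l (f u)%:E (Hsub u)).
rewrite Hy -!EFinD lee_fin; have := lf_le_convex cf gr xt u.
rewrite /lf !dotvBl !dotvBr; lra.
Qed.

(* Apply the lower model at the midpoint of y and w and use strong convexity. *)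
Lemma prox_strong_lower_model mubar mu L xt y :
  convex_fun f -> is_gradient f gf -> 0 < L ->
  strongly_convex_efun (phi f h) mubar -> 0 <= mu <= mubar ->
  is_minimizer (prox_obj f gf h L xt) y ->
  exists py : R, phi f h y = py%:E /\ forall w pw, phi f h w = pw%:E ->
    py - 2 * (f y - lf f gf xt y) + dotv (L *: (xt - y)) (w - y)
      + mu / 4 * dotv (w - y) (w - y) <= pw.
Proof.
move=> cf gr L0 sc /andP [m0 m1] ymin.
have [hy [Hy Hlow]] := prox_lower_model cf gr L0 ymin.
exists (f y + hy); split; first by rewrite /phi Hy.
move=> w pw Hw; set m := (1 / 2) *: w + (1 - 1 / 2) *: y.
have h12 : 0 < (1 / 2 : R) < 1 by apply/andP; split; lra.
have := le_trans (Hlow m) (sc w y (1 / 2) h12); rewrite Hw /phi Hy -EFinD.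
rewrite lee_fin (_ : m - y = (1 / 2) *: (w - y)); last first.
  by apply/rowP => i; rewrite !mxE; ring.
rewrite dotvZr normv_sqr.
have : mu / 4 * dotv (w - y) (w - y) <= mubar / 4 * dotv (w - y) (w - y).
  by rewrite ler_wpM2r ?dotv_ge0 //; lra.
lra.
Qed.

End Resolvent.

Lemma strongly_convex_min_gap (R : realType) n (g : 'rV[R]_n -> \bar R) mubar zs u pu ps :
  0 <= mubar -> strongly_convex_efun g mubar -> is_minimizer g zs ->
  g u = pu%:E -> g zs = ps%:E -> mubar / 2 * dotv (u - zs) (u - zs) <= pu - ps.
Proof.
move=> m0 sc zmin Hu Hs; set c := mubar / 2 * dotv (u - zs) (u - zs).
apply: (@le_of_le_addtM _ _ _ c); first by rewrite mulr_ge0 ?divr_ge0 ?dotv_ge0.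
move=> t /andP [t0 t1].
have := sc zs u (1 - t); rewrite subr_gt0 t1 ltrBlDr ltrDl t0 => /(_ isT).
have Nzu : normv (zs - u) ^+ 2 = dotv (u - zs) (u - zs) by rewrite normv_sqr -dotvNN opprB.
rewrite Hu Hs Nzu => Hsc.
have := le_trans (zmin _) Hsc; rewrite Hs -!EFinM -!EFinD lee_fin.
have -> : (1 - t) * ps + (1 - (1 - t)) * pu
    - mubar / 2 * (1 - t) * (1 - (1 - t)) * dotv (u - zs) (u - zs)
  = ps + t * (pu - ps) - t * (c - t * c) by rewrite /c; ring.
move=> H; have : t * (c - t * c) <= t * (pu - ps) by lra.
rewrite ler_pM2l //; lra.
Qed.

Lemma acg_aP (R : realType) (tau A L : R) : 0 < tau -> 0 <= A -> 0 < L ->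
  0 < acg_a tau A L /\ L * acg_a tau A L ^+ 2 = tau * (A + acg_a tau A L).
Proof.
move=> t0 A0 L0; rewrite /acg_a; set S := Num.sqrt _.
have S0 : 0 <= S := sqrtr_ge0 _.
have S2 : S ^+ 2 = tau ^+ 2 + 4 * tau * A * L.
  by rewrite sqr_sqrtr // addr_ge0 ?sqr_ge0 // !mulr_ge0 // ltW.
split; first by rewrite divr_gt0 ?mulr_gt0 //; lra.
apply/eqP; rewrite -subr_eq0; apply/eqP.
have -> : L * ((tau + S) / (2 * L)) ^+ 2 - tau * (A + (tau + S) / (2 * L))
   = (S ^+ 2 - (tau ^+ 2 + 4 * tau * A * L)) / (4 * L) by field; rewrite gt_eqF.
by rewrite S2 subrr mul0r.
Qed.

Lemma acg_scalar_ineq (R : realType) (A a tau mu L x yt y u xt s xp : R) :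
  0 <= A -> 0 < a -> 0 < tau -> 0 <= mu -> L * a ^+ 2 = tau * (A + a) ->
  xt = (A + a)^-1 * (A * yt + a * x) -> s = L * (xt - y) ->
  xp = (tau + a * mu / 2)^-1 * (mu * a / 2 * y + tau * x - a * s) ->
  0 <= A * (s * (yt - y)) + a * (s * (u - y)) + a * mu / 4 * ((u - y) * (u - y))
     + tau / 2 * ((u - x) * (u - x)) - (tau + a * mu / 2) / 2 * ((u - xp) * (u - xp))
     - (A + a) * L / 2 * ((y - xt) * (y - xt)).
Proof.
move=> A0 a0 t0 m0 eL ext es exp.
have eL' : L = tau * (A + a) / a ^+ 2 by rewrite -eL; field; rewrite gt_eqF.
have am : 0 <= a * mu by rewrite mulr_ge0 // ltW.
set S := a * mu / 4 * (xp - y) ^+ 2 + (tau * (xp - x) + a * s) ^+ 2 / (2 * tau).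
suff -> : A * (s * (yt - y)) + a * (s * (u - y)) + a * mu / 4 * ((u - y) * (u - y))
     + tau / 2 * ((u - x) * (u - x)) - (tau + a * mu / 2) / 2 * ((u - xp) * (u - xp))
     - (A + a) * L / 2 * ((y - xt) * (y - xt)) = S.
  apply: addr_ge0; first by rewrite mulr_ge0 ?sqr_ge0 // divr_ge0.
  by rewrite divr_ge0 ?sqr_ge0 // mulr_ge0 // ltW.
rewrite /S exp es ext eL'; field.
by rewrite !gt_eqF //; lra.
Qed.

Lemma acg_vector_ineq (R : realType) n (A a tau mu L : R) (x yt y u xt s xp : 'rV[R]_n) :
  0 <= A -> 0 < a -> 0 < tau -> 0 <= mu -> L * a ^+ 2 = tau * (A + a) ->
  xt = (A + a)^-1 *: (A *: yt + a *: x) -> s = L *: (xt - y) ->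
  xp = (tau + a * mu / 2)^-1 *: ((mu * a / 2) *: y + tau *: x - a *: s) ->
  0 <= A * dotv s (yt - y) + a * dotv s (u - y) + a * mu / 4 * dotv (u - y) (u - y)
     + tau / 2 * dotv (u - x) (u - x) - (tau + a * mu / 2) / 2 * dotv (u - xp) (u - xp)
     - (A + a) * L / 2 * dotv (y - xt) (y - xt).
Proof.
move=> A0 a0 t0 m0 eL ext es exp.
suff : 0 <= \sum_(i < n) (A * (s ord0 i * (yt - y) ord0 i) + a * (s ord0 i * (u - y) ord0 i)
   + a * mu / 4 * ((u - y) ord0 i * (u - y) ord0 i)
   + tau / 2 * ((u - x) ord0 i * (u - x) ord0 i)
   - (tau + a * mu / 2) / 2 * ((u - xp) ord0 i * (u - xp) ord0 i)
   - (A + a) * L / 2 * ((y - xt) ord0 i * (y - xt) ord0 i)).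
  by rewrite !(sumrB, big_split) /= -!mulr_sumr.
apply: sumr_ge0 => i _; rewrite !mxE; apply: acg_scalar_ineq eL _ _ _ => //.
- by rewrite ext !mxE.
- by rewrite es !mxE.
- by rewrite exp !mxE.
Qed.

Lemma acg_a_ge (R : realType) (mu A a L Lmax : R) :
  0 < mu -> 0 <= A -> 0 < a -> 0 < L -> L <= Lmax ->
  L * a ^+ 2 = (1 + mu * A / 2) * (A + a) -> Num.sqrt (mu / (2 * Lmax)) * A <= a.
Proof.
move=> m0 A0 a0 L0 LM eL; have Lm0 : 0 < Lmax := lt_le_trans L0 LM.
have xA0 : 0 <= Num.sqrt (mu / (2 * Lmax)) * A by rewrite mulr_ge0 ?sqrtr_ge0.
rewrite -ler_sqr ?nnegrE ?(ltW a0) // exprMn sqr_sqrtr; last first.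
  by rewrite divr_ge0 ?mulr_ge0 // ltW.
rewrite -(ler_pM2r Lm0).
have -> : mu / (2 * Lmax) * A ^+ 2 * Lmax = mu / 2 * A ^+ 2 by field; rewrite gt_eqF.
apply: le_trans (_ : L * a ^+ 2 <= _); last by rewrite mulrC; apply: ler_wpM2l; rewrite ?sqr_ge0.
have : 0 <= mu * A * a by rewrite !mulr_ge0 // ltW.
rewrite eL; nra.
Qed.

Section Cycle.
Variables (R : realType) (n : nat) (f : 'rV[R]_n -> R) (gf : 'rV[R]_n -> 'rV[R]_n).
Variables (h : 'rV[R]_n -> \bar R) (chi beta mu M0 : R) (x0 : 'rV[R]_n).
Variable tr : ctrace R n.
Hypotheses (Hrun : cycle_run f gf h chi beta mu x0 M0 tr).
Hypotheses (b1 : 1 < beta) (M00 : 0 < M0) (m0 : 0 < mu).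

Lemma cycle_L_gt0 j : 0 < tL tr j.
Proof.
case: (Hrun) => [[hL0 _ _ _] Hs]; elim: j => [|j IH]; first by rewrite hL0.
have [[-> _ _ _] _] := Hs j; apply: mulr_gt0 => //; apply: exprn_gt0; exact: lt_trans ltr01 b1.
Qed.

Lemma cycle_L_le_succ j : tL tr j <= tL tr j.+1.
Proof.
case: (Hrun) => _ Hs; have [[-> _ _ _] _] := Hs j.
by rewrite ler_peMl ?exprn_ege1 // ltW // cycle_L_gt0.
Qed.

Lemma cycle_A_tau j : 0 <= tA tr j /\ ttau tr j = 1 + mu * tA tr j / 2.
Proof.
case: (Hrun) => [[_ hA0 ht0 _] Hs]; elim: j => [|j [A0 et]].
  by rewrite hA0 ht0 mulr0 mul0r addr0.
have [[_ _ ha _] [_ -> [-> _ _ _]]] := Hs j.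
have t0 : 0 < ttau tr j.
  by rewrite et; apply: (lt_le_trans ltr01); rewrite lerDl divr_ge0 ?mulr_ge0 // ltW.
have [a0 _] := acg_aP t0 A0 (cycle_L_gt0 j.+1).
by rewrite ha; split; [exact: addr_ge0 A0 (ltW a0) | rewrite et; ring].
Qed.

Lemma cycle_tau_gt0 j : 0 < ttau tr j.
Proof.
have [A0 ->] := cycle_A_tau j.
by apply: (lt_le_trans ltr01); rewrite lerDl divr_ge0 ?mulr_ge0 // ltW.
Qed.

Lemma cycle_a j : 0 < ta tr j /\ tL tr j.+1 * ta tr j ^+ 2 = ttau tr j * (tA tr j + ta tr j).
Proof.
case: (Hrun) => _ Hs; have [[_ _ -> _] _] := Hs j.
exact: acg_aP (cycle_tau_gt0 j) (cycle_A_tau j).1 (cycle_L_gt0 j.+1).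
Qed.

Lemma cycle_AL_growth Lmax : (forall j, tL tr j <= Lmax) ->
  forall j, (1 + Num.sqrt (mu / (2 * Lmax))) ^+ j <= tA tr j.+1 * tL tr j.+1.
Proof.
move=> LM; set x := Num.sqrt _; have x_ge0 : 0 <= x := sqrtr_ge0 _.
case: (Hrun) => [[_ hA0 ht0 _] Hs].
elim=> [|j IH].
  have [_ [_ -> _]] := Hs 0%N; have [a0 ea] := cycle_a 0.
  rewrite hA0 ht0 add0r mul1r in ea *.
  have -> : ta tr 0 * tL tr 1 = 1.
    by apply: (mulIf (lt0r_neq0 a0)); rewrite mul1r -[RHS]ea expr2 mulrA (mulrC (ta tr 0)).
  by rewrite expr0.
have [_ [_ -> _]] := Hs j.+1; have [a0 ea] := cycle_a j.+1.
have [A0 et] := cycle_A_tau j.+1; rewrite et in ea.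
have xa := acg_a_ge m0 A0 a0 (cycle_L_gt0 _) (LM _) ea; rewrite -/x in xa.
have LL := cycle_L_le_succ j.+1; have L1 := cycle_L_gt0 j.+1.
rewrite exprS; apply: le_trans (ler_wpM2l _ IH) _; first lra.
have h1 : tA tr j.+1 * tL tr j.+1 <= tA tr j.+1 * tL tr j.+2 by rewrite ler_wpM2l.
have h2 := le_trans (ler_wpM2r (ltW L1) xa) (ler_wpM2l (ltW a0) LL).
rewrite !mulrDl mul1r mulrA; lra.
Qed.

Section Values.
Hypotheses (ph : proper_fun h) (ch : convex_efun h).
Variable p0 : R.
Hypothesis H0 : phi f h x0 = p0%:E.

Lemma cycle_phi_y_fin j : exists p, phi f h (ty tr j) = p%:E.
Proof.
case: (Hrun) => [[_ _ _ [_ hy0 _]] Hs]; case: j => [|j]; first by exists p0; rewrite hy0.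
have [[_ _ _ [_ ymin _]] _] := Hs j.
have [/EFin_fin_numP [hy Hy] _] := prox_subgradient ph ch (cycle_L_gt0 j.+1) ymin.
by exists (f (ty tr j.+1) + hy); rewrite /phi Hy.
Qed.

Lemma cycle_phi_xi j :
  (phi f h (txi tr j) <= phi f h x0)%E /\ exists p, phi f h (txi tr j) = p%:E.
Proof.
case: (Hrun) => [[_ _ _ [_ _ hxi0]] Hs].
elim: j => [|j [IH1 IH2]]; first by rewrite hxi0; split => //; exists p0.
have [_ [-> _ _]] := Hs j; case: ifP => // le_y; split.
- exact: le_trans le_y IH1.
- exact: cycle_phi_y_fin.
Qed.

End Values.

Lemma cycle_phi_xi_le_y j : (phi f h (txi tr j.+1) <= phi f h (ty tr j.+1))%E.
Proof.
case: (Hrun) => _ Hs; have [_ [-> _ _]] := Hs j.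
by case: ifP => // /negbT; rewrite -ltNge => /ltW.
Qed.

End Cycle.

Definition backtracks (R : realType) n (tr : ctrace R n) (J : nat) : nat :=
  \sum_(1 <= j < J.+1) tk tr j.

Lemma acg_count_backtracks (R : realType) n (tr : ctrace R n) J :
  acg_count tr J = (backtracks tr J + J)%N.
Proof.
rewrite /acg_count /backtracks; elim: J => [|J IH]; first by rewrite !big_geq.
by rewrite !(big_nat_recr J.+1) //= IH; lia.
Qed.

Lemma backtracks_le_log (R : realType) (Lbar chi beta M0 : R) (S : nat) :
  0 < Lbar -> chi < 1 -> 1 < beta -> 0 < M0 ->
  S = 0%N \/ beta ^+ S.-1 * M0 < 2 * Lbar / (1 - chi) ->
  S%:R <= (Num.ceil (logplus 0 (2 * Lbar / ((1 - chi) * M0)) / ln beta))%:~R :> R.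
Proof.
move=> L0 c1 b1 M00 HS; have lb : 0 < ln beta by rewrite ln_gt0.
set r := 2 * Lbar / ((1 - chi) * M0).
have lp0 : 0 <= logplus 0 r by rewrite /logplus le_max lexx orbT.
case: HS => [-> | HS].
  rewrite (_ : 0%:R = 0%:~R) // ler_int ceil_ge0.
  have : 0 <= logplus 0 r / ln beta by rewrite divr_ge0 // ltW.
  lra.
apply: natr_le_ceil.
have rp : beta ^+ S.-1 < r by rewrite /r invfM mulrA ltr_pdivlMr // mulrC.
have bp : 0 < beta ^+ S.-1 by rewrite exprn_gt0 //; lra.
have : ln (beta ^+ S.-1) < ln r by rewrite ltr_ln ?posrE //; apply: lt_trans rp.
rewrite lnXn; last lra.
have : ln r <= logplus 0 r by rewrite /logplus le_max lexx.
rewrite ltr_pdivlMr //; case: S {HS rp bp} => [|S] /= H1 H2; first nra.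
by rewrite -natr1 addrK mulr_natl; lra.
Qed.

Section CycleSmooth.
Variables (R : realType) (n : nat) (f : 'rV[R]_n -> R) (gf : 'rV[R]_n -> 'rV[R]_n).
Variables (h : 'rV[R]_n -> \bar R) (chi beta mu M0 Lbar : R) (x0 : 'rV[R]_n).
Variable tr : ctrace R n.
Hypotheses (Hrun : cycle_run f gf h chi beta mu x0 M0 tr).
Hypotheses (b1 : 1 < beta) (M00 : 0 < M0) (c1 : chi < 1).
Hypotheses (cf : convex_fun f) (gr : is_gradient f gf).
Hypotheses (L0 : 0 < Lbar) (lg : lipschitz_grad gf Lbar).

Lemma cycle_trial_lt j i : (i < tk tr j.+1)%N -> beta ^+ i * tL tr j < 2 * Lbar / (1 - chi).
Proof.
case: (Hrun) => _ Hs; have [[_ hk _ _] _] := Hs j.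
by move=> /hk [u _]; apply: ls_test_fail_lt.
Qed.

Lemma cycle_L_ge j : M0 <= tL tr j.
Proof.
case: (Hrun) => [[hL0 _ _ _] _]; elim: j => [|j IH]; first by rewrite hL0.
exact: le_trans IH (cycle_L_le_succ Hrun b1 M00 j).
Qed.

Lemma cycle_L_le j : tL tr j <= Num.max M0 (2 * beta / (1 - chi) * Lbar).
Proof.
case: (Hrun) => [[hL0 _ _ _] Hs]; elim: j => [|j IH]; first by rewrite hL0 le_max lexx.
have [[-> _ _ _] _] := Hs j; case Ek: (tk tr j.+1) => [|k]; first by rewrite mul1r.
have := @cycle_trial_lt j k; rewrite Ek ltnSn => /(_ isT) Hk.
rewrite exprS -mulrA le_max; apply/orP; right.
have -> : 2 * beta / (1 - chi) * Lbar = beta * (2 * Lbar / (1 - chi)).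
  by field; rewrite gt_eqF // subr_gt0.
by rewrite ler_pM2l ?(lt_trans ltr01 b1) // ltW.
Qed.

Lemma cycle_L_backtracks J : tL tr J = beta ^+ backtracks tr J * M0 /\
  (backtracks tr J = 0%N \/ beta ^+ (backtracks tr J).-1 * M0 < 2 * Lbar / (1 - chi)).
Proof.
case: (Hrun) => [[hL0 _ _ _] Hs]; elim: J => [|J [IH IH2]].
  by rewrite /backtracks big_geq // hL0 mul1r; split => //; left.
rewrite /backtracks big_nat_recr //= -/(backtracks tr J).
have [[-> _ _ _] _] := Hs J; rewrite IH mulrA -exprD addnC; split => //.
case Ek: (tk tr J.+1) => [|k]; first by rewrite addn0.
right; have := @cycle_trial_lt J k; rewrite Ek ltnSn IH mulrA -exprD => /(_ isT).
by rewrite addnS addnC.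
Qed.

Lemma cycle_backtracks_le J :
  (backtracks tr J)%:R <= (Num.ceil (logplus 0 (2 * Lbar / ((1 - chi) * M0)) / ln beta))%:~R :> R.
Proof. exact: backtracks_le_log (cycle_L_backtracks J).2. Qed.

End CycleSmooth.

Section Potential.
Variables (R : realType) (n : nat) (f : 'rV[R]_n -> R) (gf : 'rV[R]_n -> 'rV[R]_n).
Variables (h : 'rV[R]_n -> \bar R) (chi beta mu M0 mubar : R) (x0 : 'rV[R]_n).
Variable tr : ctrace R n.
Hypotheses (Hrun : cycle_run f gf h chi beta mu x0 M0 tr).
Hypotheses (b1 : 1 < beta) (M00 : 0 < M0) (m0 : 0 < mu) (m1 : mu <= mubar).
Hypotheses (c0 : 0 <= chi) (cf : convex_fun f) (gr : is_gradient f gf).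
Hypotheses (ph : proper_fun h) (ch : convex_efun h).
Hypothesis sc : strongly_convex_efun (phi f h) mubar.

(* Combine the ACG identity with the strongly convex lower model at u and at
   y_j, and absorb the linearization error by the line-search test. *)
Lemma cycle_potential_step u pu j pyt :
  phi f h u = pu%:E -> phi f h (ty tr j) = pyt%:E ->
  exists py, phi f h (ty tr j.+1) = py%:E /\
    tA tr j.+1 * (py - pu) + ttau tr j.+1 / 2 * dotv (u - tx tr j.+1) (u - tx tr j.+1)
    + chi / 2 * tA tr j.+1 * tL tr j.+1 *
        dotv (ty tr j.+1 - txt tr j) (ty tr j.+1 - txt tr j)
    <= tA tr j * (pyt - pu) + ttau tr j / 2 * dotv (u - tx tr j) (u - tx tr j).
Proof.
move=> Hu Hyt.
have [A0 _] := cycle_A_tau Hrun b1 M00 m0 j; have [a0 ea] := cycle_a Hrun b1 M00 m0 j.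
have t0 := cycle_tau_gt0 Hrun b1 M00 m0 j; have Lp := cycle_L_gt0 Hrun b1 M00 j.+1.
case: (Hrun) => _ /(_ j) [[_ _ _ [hxt ymin hls]] [_ hA [htau hs hx _]]].
have mb : 0 <= mu <= mubar by rewrite m1 ltW.
have [py [Hy Low]] := prox_strong_lower_model ph ch cf gr Lp sc mb ymin.
exists py; split => //.
have := acg_vector_ineq u A0 a0 t0 (ltW m0) ea hxt hs.
rewrite htau in hx; move=> /(_ _ hx); rewrite -htau -hA => Hacg; rewrite -hs in Low.
have Lu := Low _ _ Hu; have Lyt := Low _ _ Hyt.
move: hls; rewrite /ls_test normv_sqr => hls.
set A := tA tr j in A0 ea hA Hacg Lyt *; set a := ta tr j in a0 ea hA Hacg *.
set L := tL tr j.+1 in Lp ea Hacg hls *; set s := ts tr j.+1 in Hacg Lu Lyt *.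
set y := ty tr j.+1 in Hacg Lu Lyt hls *; set xt := txt tr j in Hacg Lu Lyt hls *.
set del := f y - lf f gf xt y in Lu Lyt.
set r := dotv (y - xt) (y - xt) in Hacg hls *; have r0 : 0 <= r := dotv_ge0 _.
have hdel : 2 * del <= (1 - chi) * L / 2 * r by rewrite /del; lra.
have Nyt0 := dotv_ge0 (ty tr j - y); have Nu0 := dotv_ge0 (u - y).
have aLu : a * (py - 2 * del + dotv s (u - y) + mu / 4 * dotv (u - y) (u - y)) <= a * pu.
  by rewrite ler_wpM2l // ltW.
have ALyt : A * (py - 2 * del + dotv s (ty tr j - y)) <= A * pyt.
  rewrite ler_wpM2l //; apply: le_trans Lyt.
  by rewrite lerDl mulr_ge0 // divr_ge0 // ltW.
have Adel : tA tr j.+1 * (2 * del) <= tA tr j.+1 * ((1 - chi) * L / 2 * r).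
  by rewrite ler_wpM2l // hA addr_ge0 // ltW.
rewrite hA in Hacg Adel *; move: aLu ALyt Adel Hacg; rewrite !mulrDr !mulrDl !mulrN.
nra.
Qed.

Variable p0 : R.
Hypothesis H0 : phi f h x0 = p0%:E.

Lemma cycle_potential_le u pu j : phi f h u = pu%:E ->
  exists py, phi f h (ty tr j) = py%:E /\
    tA tr j * (py - pu) + ttau tr j / 2 * dotv (u - tx tr j) (u - tx tr j)
    <= 1 / 2 * dotv (u - x0) (u - x0).
Proof.
move=> Hu; elim: j => [|j [pyt [Hyt IH]]].
  case: (Hrun) => [[_ -> -> [-> -> _]] _]; exists p0; split => //.
  by rewrite mul0r add0r.
have [py [Hy St]] := cycle_potential_step Hu Hyt; exists py; split => //.
apply: le_trans IH; apply: le_trans St; rewrite lerDl.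
have [A0 _] := cycle_A_tau Hrun b1 M00 m0 j.+1.
have Lp := cycle_L_gt0 Hrun b1 M00 j.+1.
by rewrite !mulr_ge0 ?dotv_ge0 ?divr_ge0 // ltW.
Qed.

(* Take u = xi_{j+1}: by the choice of xi, phi(y_{j+1}) >= phi(u), so the
   potential bound at step j+1 contradicts the restart test. *)
Lemma cycle_no_restart j : ~ restart_at chi x0 tr j.+1.
Proof.
have [_ [pu Hu]] := cycle_phi_xi Hrun b1 M00 ph ch H0 j.+1.
have uy := cycle_phi_xi_le_y Hrun j.
have [pyt [Hyt P]] := cycle_potential_le j Hu.
have [py [Hy St]] := cycle_potential_step Hu Hyt.
rewrite Hu Hy lee_fin in uy.
have [A0 _] := cycle_A_tau Hrun b1 M00 m0 j.+1.
have t0 := cycle_tau_gt0 Hrun b1 M00 m0 j.+1.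
have X0 : 0 <= ttau tr j.+1 / 2 * dotv (txi tr j.+1 - tx tr j.+1) (txi tr j.+1 - tx tr j.+1).
  by rewrite mulr_ge0 ?dotv_ge0 // divr_ge0 // ltW.
have AP : 0 <= tA tr j.+1 * (py - pu) by rewrite mulr_ge0 // subr_ge0.
rewrite /restart_at /= !normv_sqr => Hre.
(* lra rejects the equations between extended reals in the context. *)
clear Hu Hyt Hy; lra.
Qed.

Lemma cycle_stop_terminates eps J : (0 < J)%N -> stops_at chi x0 eps tr J ->
  terminate_at chi x0 eps tr J.
Proof. by case: J => // J _ [|//]; move/cycle_no_restart. Qed.

End Potential.

Lemma strongly_convex_sublevel_dist (R : realType) n (g : 'rV[R]_n -> \bar R) mubar zs
    (u w : 'rV[R]_n) pu pw ps :
  0 < mubar -> strongly_convex_efun g mubar -> is_minimizer g zs ->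
  g u = pu%:E -> g w = pw%:E -> g zs = ps%:E -> pu <= pw ->
  dotv (u - w) (u - w) <= 8 / mubar * (pw - ps).
Proof.
move=> m0 sc zmin Hu Hw Hs le_uw.
have du := strongly_convex_min_gap (ltW m0) sc zmin Hu Hs.
have dw := strongly_convex_min_gap (ltW m0) sc zmin Hw Hs.
have m2 : 0 < mubar / 2 by rewrite divr_gt0.
have half d pd : mubar / 2 * d <= pd -> d <= 2 / mubar * pd.
  have -> : 2 / mubar * pd = (mubar / 2)^-1 * pd by field; rewrite gt_eqF.
  by rewrite ler_pdivlMl.
have := dotv_sqr_le_sum u w zs.
have -> : 8 / mubar * (pw - ps) = 2 * (2 / mubar * (pw - ps)) + 2 * (2 / mubar * (pw - ps)).
  by field; rewrite gt_eqF.
have := half _ _ du; have := half _ _ dw.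
have : 2 / mubar * (pu - ps) <= 2 / mubar * (pw - ps).
  by apply: ler_wpM2l; [rewrite divr_ge0 // ltW | lra].
lra.
Qed.

Lemma pow_ge_of_logplus (R : realType) (x T : R) (k : nat) : 0 < x ->
  (1 + 2 / x) * logplus 1 T <= k%:R -> T <= (1 + x) ^+ k.
Proof.
move=> x0 Hk; have xk : 0 < (1 + x) ^+ k by rewrite exprn_gt0 //; lra.
have [T0|T0] := leP T 0; first exact: le_trans T0 (ltW xk).
have lp1 : 1 <= logplus 1 T by rewrite /logplus le_max lexx orbT.
rewrite -ler_ln ?posrE // lnXn; last lra.
apply: le_trans (_ : logplus 1 T <= _); first by rewrite /logplus le_max lexx.
rewrite -mulr_natr; apply: le_trans (_ : (1 + 2 / x) * logplus 1 T * ln (1 + x) <= _).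
  rewrite mulrAC ler_peMl //; [lra | exact: mul_ln1D_ge1].
by rewrite mulrC; apply: ler_wpM2l Hk; rewrite ln_ge0 //; lra.
Qed.

Lemma inv_sqrt_ratio (R : realType) (mu Lm : R) : 0 < mu -> 0 < Lm ->
  2 / Num.sqrt (mu / (2 * Lm)) = 2 * Num.sqrt 2 * Num.sqrt (Lm / mu).
Proof.
move=> m0 L0; have s0 : 0 < Num.sqrt (mu / (2 * Lm)) by rewrite sqrtr_gt0 divr_gt0 ?mulr_gt0.
apply: (mulIf (lt0r_neq0 s0)); rewrite mulfVK ?gt_eqF // -!mulrA -!sqrtrM ?divr_ge0 ?ltW //.
by rewrite (_ : 2 * (Lm / mu * (mu / (2 * Lm))) = 1) ?sqrtr1 ?mulr1 //; field; rewrite !gt_eqF.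
Qed.

Lemma residual_le_of_AL_ge (R : realType) (chi AL r C zeta eps : R) :
  0 < chi -> 0 < AL -> 0 <= r -> 0 < eps -> 0 <= C ->
  chi * AL * r <= C -> C * zeta ^+ 2 / (chi * eps ^+ 2) <= AL -> zeta ^+ 2 * r <= eps ^+ 2.
Proof.
move=> c0 AL0 r0 e0 C0 HC HAL; have e20 : 0 < eps ^+ 2 by rewrite exprn_gt0.
have cAL : 0 < chi * AL by rewrite mulr_gt0.
have [C00|Cp] := eqVneq C 0.
  have -> : r = 0 by apply/eqP; rewrite eq_le r0 andbT -(ler_pM2l cAL) mulr0 -C00.
  by rewrite mulr0 ltW.
have {}Cp : 0 < C by rewrite lt_neqAle eq_sym Cp.
have : C * zeta ^+ 2 / (chi * eps ^+ 2) * (chi * r) <= C.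
  apply: le_trans HC; rewrite [X in _ <= X]mulrAC [X in _ <= X]mulrC.
  by apply: ler_wpM2r HAL; rewrite mulr_ge0 // ltW.
have -> : C * zeta ^+ 2 / (chi * eps ^+ 2) * (chi * r) = C * (zeta ^+ 2 * r / eps ^+ 2).
  by field; rewrite !gt_eqF.
by rewrite ger_pMr // ler_pdivrMr // mul1r.
Qed.

Section Stopping.
Variables (R : realType) (n : nat) (f : 'rV[R]_n -> R) (gf : 'rV[R]_n -> 'rV[R]_n).
Variables (h : 'rV[R]_n -> \bar R) (chi beta mu M0 Lbar mubar eps : R).
Variables (x0 zs : 'rV[R]_n) (tr : ctrace R n) (p0 ps : R).
Hypotheses (Hrun : cycle_run f gf h chi beta mu x0 M0 tr).
Hypotheses (b1 : 1 < beta) (M00 : 0 < M0) (m0 : 0 < mu) (c01 : 0 < chi < 1) (e0 : 0 < eps).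
Hypotheses (cf : convex_fun f) (gr : is_gradient f gf).
Hypotheses (L0 : 0 < Lbar) (lg : lipschitz_grad gf Lbar).
Hypotheses (ph : proper_fun h) (ch : convex_efun h).
Hypotheses (mb0 : 0 < mubar) (sc : strongly_convex_efun (phi f h) mubar).
Hypotheses (zmin : is_minimizer (phi f h) zs).
Hypotheses (H0 : phi f h x0 = p0%:E) (Hs : phi f h zs = ps%:E).

Let Lm := Num.max M0 (2 * beta / (1 - chi) * Lbar).
Let zeta := Lbar + Lm.
Let Q := 2 * Num.sqrt 2 * Num.sqrt (Lm / mu).
Let C := 8 / mubar * (p0 - ps).
Let T := C * zeta ^+ 2 / (chi * eps ^+ 2).

Let c1 : chi < 1. Proof. by case/andP: c01. Qed.
Let Lm0 : 0 < Lm. Proof. by rewrite lt_max M00. Qed.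
Let L_le_Lm j : tL tr j <= Lm. Proof. exact: (cycle_L_le Hrun b1 c1 cf gr L0 lg j). Qed.

Lemma cycle_AL_ge k : (1 + Q) * logplus 1 T <= k%:R -> T <= tA tr k.+1 * tL tr k.+1.
Proof.
move=> Hk; apply: le_trans (cycle_AL_growth Hrun b1 M00 m0 L_le_Lm k).
apply: pow_ge_of_logplus; first by rewrite sqrtr_gt0 divr_gt0 ?mulr_gt0.
by rewrite inv_sqrt_ratio.
Qed.

(* If the restart test fails, xi stays C-close to x0 and, since A L is large,
   the residual is at most eps. *)
Lemma cycle_stops_at k : (1 + Q) * logplus 1 T <= k%:R -> stops_at chi x0 eps tr k.+1.
Proof.
move=> Hk; have c0 : 0 < chi by case/andP: c01.
case: (pselect (restart_at chi x0 tr k.+1)) => Hre; [by left | right; split => //].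
move: Hre; rewrite /restart_at /= !normv_sqr => /negP; rewrite -leNgt => Hre.
have [le_xi [pxi Hxi]] := cycle_phi_xi Hrun b1 M00 ph ch H0 k.+1.
rewrite Hxi H0 lee_fin in le_xi.
have Hdist := strongly_convex_sublevel_dist mb0 sc zmin Hxi H0 Hs le_xi.
have Lp := cycle_L_gt0 Hrun b1 M00 k.+1.
case: (Hrun) => _ /(_ k) [_ [_ _ [_ hs _ hv]]].
have Hres := residual_dotv_le L0 lg (ty tr k.+1) (txt tr k) Lp.
rewrite -hs -hv in Hres.
set r := dotv (ty tr k.+1 - txt tr k) _ in Hre Hres.
have AL0 : 0 < tA tr k.+1 * tL tr k.+1.
  apply: lt_le_trans (cycle_AL_growth Hrun b1 M00 m0 L_le_Lm k).
  by rewrite exprn_gt0 // ltr_pwDl // sqrtr_ge0.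
have C0 : 0 <= C.
  have := zmin x0; rewrite H0 Hs lee_fin => ?.
  by rewrite mulr_ge0 ?subr_ge0 // divr_ge0 // ltW.
have zr : zeta ^+ 2 * r <= eps ^+ 2.
  apply: residual_le_of_AL_ge c0 AL0 (dotv_ge0 _) e0 C0 _ (cycle_AL_ge Hk).
  by rewrite mulrA; apply: le_trans Hre Hdist.
have zL : (Lbar + tL tr k.+1) ^+ 2 <= zeta ^+ 2.
  (* nra does not see section hypotheses, hence [move: L0]. *)
  by have := L_le_Lm k.+1; move: L0; rewrite /zeta; nra.
rewrite -ler_sqr ?nnegrE ?normv_ge0 ?(ltW e0) // normv_sqr.
exact: le_trans Hres (le_trans (ler_wpM2r (dotv_ge0 _) zL) zr).
Qed.

Lemma cycle_count_le J : (forall j, (0 < j < J)%N -> ~ stops_at chi x0 eps tr j) ->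
  (acg_count tr J)%:R <= (Num.ceil ((1 + Q) * logplus 1 T + 1))%:~R
    + (Num.ceil (logplus 0 (2 * Lbar / ((1 - chi) * M0)) / ln beta))%:~R :> R.
Proof.
move=> HJ; rewrite acg_count_backtracks natrD addrC.
apply: lerD; last exact: cycle_backtracks_le Hrun b1 M00 c1 cf gr L0 lg J.
apply: natr_le_ceil; set y := (1 + Q) * logplus 1 T.
have y0 : 0 <= y.
  rewrite mulr_ge0 ?addr_ge0 ?mulr_ge0 ?sqrtr_ge0 //.
  by rewrite /logplus le_max ler01 orbT.
case: J HJ => [|[|j]] HJ; [lra | lra |].
have : j%:R < y.
  rewrite ltNge; apply/negP => /cycle_stops_at; apply: HJ.
  by rewrite /= ltnSn.
by rewrite -[j.+2%:R]natr1 -natr1; lra.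
Qed.

End Stopping.

Lemma minimizer_phi_fin (R : realType) n (f : 'rV[R]_n -> R) h (zs : 'rV[R]_n) :
  proper_fun h -> is_minimizer (phi f h) zs -> exists ps, phi f h zs = ps%:E.
Proof.
move=> [[xp hxp] hgt] zmin.
have /EFin_fin_numP [r Hr] : h xp \is a fin_num by rewrite fin_numElt hgt.
apply/EFin_fin_numP; rewrite fin_numElt; apply/andP; split.
  by rewrite /phi; case: (h zs) (hgt zs) => [r'| |] //= _; rewrite -EFinD ltNyr.
by apply: le_lt_trans (zmin xp) _; rewrite /phi Hr -EFinD ltry.
Qed.

Lemma exists_first_stop (R : realType) n chi (x0 : 'rV[R]_n) eps tr :
  (exists j, (0 < j)%N /\ stops_at chi x0 eps tr j) -> exists J, first_stop chi x0 eps tr J.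
Proof.
move=> [j [j0 sj]]; pose p j := (0 < j)%N && `[< stops_at chi x0 eps tr j >].
have pj : p j by rewrite /p j0 asboolT.
have [J /andP [J0 /asboolP SJ] Jmin] := ex_minnP (ex_intro p j pj).
exists J; split => // i /andP [i0 iJ] si.
by have := Jmin i; rewrite /p i0 asboolT //= leqNgt iJ => /(_ isT).
Qed.

Section CycleOutcome.
Variables (R : realType) (n : nat) (f : 'rV[R]_n -> R) (gf : 'rV[R]_n -> 'rV[R]_n).
Variables (h : 'rV[R]_n -> \bar R) (chi beta mu M0 Lbar eps : R).
Variables (x0 : 'rV[R]_n) (tr : ctrace R n) (p0 : R).
Hypotheses (Hrun : cycle_run f gf h chi beta mu x0 M0 tr).
Hypotheses (b1 : 1 < beta) (M00 : 0 < M0) (c1 : chi < 1).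
Hypotheses (cf : convex_fun f) (gr : is_gradient f gf).
Hypotheses (L0 : 0 < Lbar) (lg : lipschitz_grad gf Lbar).
Hypotheses (ph : proper_fun h) (ch : convex_efun h) (H0 : phi f h x0 = p0%:E).

Lemma cycle_output J : first_stop chi x0 eps tr J -> terminate_at chi x0 eps tr J ->
  [/\ (phi f h (txi tr J) <= phi f h x0)%E, (phi f h (txi tr J) <= phi f h (ty tr J))%E,
      M0 <= tL tr J <= Num.max M0 (2 * beta / (1 - chi) * Lbar),
      subdiff h (ty tr J) (tv tr J - gf (ty tr J)) & normv (tv tr J) <= eps].
Proof.
case: J => [[]//|J] _ [_ veps]; split => //.
- exact: (cycle_phi_xi Hrun b1 M00 ph ch H0 J.+1).1.
- exact: cycle_phi_xi_le_y Hrun J.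
- by rewrite (cycle_L_ge Hrun b1 M00) (cycle_L_le Hrun b1 c1 cf gr L0 lg).
case: (Hrun) => _ /(_ J) [[_ _ _ [_ ymin _]] [_ _ [_ hs _ ->]]].
have -> : gf (ty tr J.+1) - gf (txt tr J) + ts tr J.+1 - gf (ty tr J.+1)
  = tL tr J.+1 *: (txt tr J - ty tr J.+1) - gf (txt tr J).
  by rewrite hs; apply/rowP => i; rewrite !mxE; ring.
apply: prox_subgradient => //.
exact: cycle_L_gt0 Hrun b1 M00 _.
Qed.

End CycleOutcome.

Lemma exists_stop_of_count_le (R : realType) n chi (x0 : 'rV[R]_n) eps tr (B : R) :
  (forall J, (forall j, (0 < j < J)%N -> ~ stops_at chi x0 eps tr j) ->
     (acg_count tr J)%:R <= B) ->
  exists j, (0 < j)%N /\ stops_at chi x0 eps tr j.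
Proof.
move=> Hcount; apply: contrapT => nostop.
have := archi_boundP (normr_ge0 B); set K := Num.bound _ => HK.
have : forall j, (0 < j < K)%N -> ~ stops_at chi x0 eps tr j.
  by move=> j /andP [j0 _] sj; apply: nostop; exists j.
move/Hcount; rewrite acg_count_backtracks natrD => HB.
have := ler_norm B; have := ler0n R (backtracks tr K); lra.
Qed.

Lemma method_run_inv (R : realType) n (f : 'rV[R]_n -> R) gf h (Lbar chi beta mu0 Mbar0 : R)
    (z0 : 'rV[R]_n) eps mu z Mbar Mlow tr l :
  convex_fun f -> is_gradient f gf -> 0 < Lbar -> lipschitz_grad gf Lbar ->
  proper_fun h -> convex_efun h -> chi < 1 -> 1 < beta -> 0 < mu0 -> 0 < Mbar0 ->
  (h z0 < +oo)%E -> method_run f gf h chi beta mu0 Mbar0 z0 eps mu z Mbar Mlow tr l ->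
  forall i, (i < l)%N -> [/\ 0 < mu i, exists p, phi f h (z i) = p%:E,
    (phi f h (z i) <= phi f h z0)%E & Mbar i <= Num.max Mbar0 (2 * beta / (1 - chi) * Lbar)].
Proof.
move=> cf gr L0 lg ph ch c1 b1 mu00 M00 hz0 [[mu_0 z_0 Mbar_0 Hcyc] Hrest].
elim=> [|i IH] Hi.
  have /EFin_fin_numP [r Hr] : h z0 \is a fin_num by rewrite fin_numElt hz0 ph.2.
  rewrite mu_0 z_0 Mbar_0; split; rewrite ?le_max ?lexx //.
  by exists (f z0 + r); rewrite /phi Hr.
have [mui [pi Hpi] Hle HM] := IH (ltnW Hi).
have [J [_ _ -> -> ->]] := Hrest i.+1 Hi.
have [/andP [Ml1 Ml2] CR] := Hcyc i.+1 (ltnW Hi).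
have Mlp : 0 < Mlow i.+1 by apply: lt_le_trans Ml1; rewrite lt_max M00 orbT.
have [le_xi fin_xi] := cycle_phi_xi CR b1 Mlp ph ch Hpi J.
split => //; first by rewrite divr_gt0.
  exact: le_trans le_xi Hle.
apply: le_trans (cycle_L_le CR b1 c1 cf gr L0 lg J) _.
by rewrite ge_max (le_trans Ml2 HM) le_max lexx orbT.
Qed.

Theorem proposition2p1 (R : realType) (n : nat) (f : 'rV[R]_n -> R)
  (gf : 'rV[R]_n -> 'rV[R]_n) (h : 'rV[R]_n -> \bar R)
  (Lbar mubar : R) (zstar : 'rV[R]_n)
  (chi beta mu0 Mbar0 eps : R) (z0 : 'rV[R]_n)
  (mu : nat -> R) (z : nat -> 'rV[R]_n) (Mbar Mlow : nat -> R)
  (tr : nat -> ctrace R n) (l : nat) :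
  convex_fun f -> is_gradient f gf -> 0 <= Lbar -> lipschitz_grad gf Lbar ->
  proper_fun h -> lsc_fun h -> convex_efun h ->
  0 < mubar -> strongly_convex_efun (phi f h) mubar ->
  is_minimizer (phi f h) zstar ->
  0 < chi < 1 -> 1 < beta -> 0 < mu0 -> 0 < Mbar0 -> (h z0 < +oo)%E -> 0 < eps ->
  0 < Lbar -> (0 < l)%N ->
  method_run f gf h chi beta mu0 Mbar0 z0 eps mu z Mbar Mlow tr l ->
  let kappa := 2 * beta / (1 - chi) in
  let Ml := Mlow l in
  let x0 := z l.-1 in
  let mul := mu l.-1 in
  let trl := tr l in
  let zeta := Lbar + Num.max Ml (kappa * Lbar) in
  let Q := 2 * Num.sqrt 2 * Num.sqrt (Num.max Ml (kappa * Lbar) / mul) in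
  let C := 8 / mubar * (fine (phi f h x0) - fine (phi f h zstar)) in
  let N : R :=
    (Num.ceil ((1 + Q) * logplus 1 (C * zeta ^+ 2 / (chi * eps ^+ 2)) + 1))%:~R
    + (Num.ceil (logplus 0 (2 * Lbar / ((1 - chi) * Ml)) / ln beta))%:~R in
  [/\ (* (a) *)
      (forall J : nat, (forall j, (0 < j < J)%N -> ~ stops_at chi x0 eps trl j) ->
         (acg_count trl J)%:R <= N),
      (* (b) *)
      (forall J : nat, first_stop chi x0 eps trl J -> terminate_at chi x0 eps trl J ->
         let y := ty trl J in let v := tv trl J in
         let xi := txi trl J in let L := tL trl J in
         [/\ (phi f h xi <= phi f h z0)%E, (phi f h xi <= phi f h y)%E,
             Mbar0 <= L <= Num.max Mbar0 (kappa * Lbar),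
             subdiff h y (v - gf y) & normv v <= eps]) &
      (* (c) *)
      (0 < mul <= mubar ->
         exists J : nat, first_stop chi x0 eps trl J /\ terminate_at chi x0 eps trl J)].

Proof.
move=> cf gr _ lg ph _ ch mb0 sc zmin chi01 b1 mu00 M00 hz0 e0 L0 l0 MR.
move=> kappa Ml x0 mul trl zeta Q C N; have /andP [c0 c1] := chi01.
have last_lt : (l.-1 < l)%N by rewrite ltn_predL.
have [mul0 [p0 H0] le_x0 HMx] :=
  method_run_inv cf gr L0 lg ph ch c1 b1 mu00 M00 hz0 MR last_lt.
have [[_ _ _ Hcyc] _] := MR.
have [/andP [Ml1 Ml2] CR] := Hcyc l (introT andP (conj l0 (leqnn l))).
rewrite ge_max in Ml1; have /andP [_ HMl0] := Ml1.
have Ml0 : 0 < Ml := lt_le_trans M00 HMl0.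
have [ps Hs] := minimizer_phi_fin ph zmin.
have Ha : forall J, (forall j, (0 < j < J)%N -> ~ stops_at chi x0 eps trl j) ->
    (acg_count trl J)%:R <= N.
  by move=> J HJ; rewrite /N /Q /zeta /C H0 Hs /=; apply: (cycle_count_le CR).
split => //.
- move=> J FS TJ; have [xi_x0 ? /andP [L1 L2] ? ?] :=
    cycle_output CR b1 Ml0 c1 cf gr L0 lg ph ch H0 FS TJ.
  split => //; first exact: le_trans xi_x0 le_x0.
  rewrite (le_trans HMl0 L1) (le_trans L2) // ge_max (le_trans Ml2 HMx).
  by rewrite le_max lexx orbT.
- move=> /andP [m0 m1]; have [J FS] := exists_first_stop (exists_stop_of_count_le Ha).
  exists J; split => //; case: (FS) => J0 SJ _.
  exact (cycle_stop_terminates CR b1 Ml0 m0 m1 (ltW c0) cf gr ph ch sc H0 J0 SJ).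
Qed.
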